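(* Let $k\ge 1$, let $A,B_1,\dots,B_k,C_1,\dots,C_k\in\mathbb{C}^{r\times r}$ with $C_i+mI$ invertible for all integers $m\ge 0$ and all $i$, and assume $AB_i=B_iA$, $B_iB_j=B_jB_i$, $C_iC_j=C_jC_i$ for all $i,j\in\{1,\dots,k\}$. Let $n\ge 1$ be an integer and suppose $A+mI$ is invertible for all $m\ge 0$. Then $$F_{\mathcal A}[A+nI]=F_{\mathcal A}+\sum_{i=1}^{k} x_iB_i\Big[\sum_{n_1=1}^{n}F_{\mathcal A}[A+n_1I,\,B_i+I,\,C_i+I]\Big]C_i^{-1}.$$ Furthermore, if $A-n_1I$ is invertible for every $0\le n_1\le n$, then $$F_{\mathcal A}[A-nI]=F_{\mathcal A}-\sum_{i=1}^{k} x_iB_i\Big[\sum_{n_1=0}^{n-1}F_{\mathcal A}[A-n_1I,\,B_i+I,\,C_i+I]\Big]C_i^{-1}.$$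
   Context: For $M\in\mathbb{C}^{r\times r}$ the Pochhammer symbol is $(M)_0=I$, $(M)_m=M(M+I)\cdots(M+(m-1)I)$ for $m\ge1$, and $(M)^{-1}_m$ denotes $((M)_m)^{-1}$ (when it exists). The Lauricella matrix function is $$F_{\mathcal A}=F_{\mathcal A}[A,B_1,\dots,B_k;C_1,\dots,C_k;x_1,\dots,x_k]=\sum_{m_1,\dots,m_k\ge0}(A)_{m_1+\cdots+m_k}\prod_{i=1}^k(B_i)_{m_i}\prod_{i=1}^k(C_i)^{-1}_{m_i}\prod_{i=1}^k\frac{x_i^{m_i}}{m_i!},$$ with $x_1,\dots,x_k$ complex (scalar) variables; products of matrices are taken in the written order of increasing $i$. Identities are understood as identities of formal power series in $x_1,\dots,x_k$ with matrix coefficients (hence also wherever the series converge). Notation: $F_{\mathcal A}[A+nI, B_i+I, C_i+I]$ means $F_{\mathcal A}$ with $A$ replaced by $A+nI$, $B_i$ by $B_i+I$, $C_i$ by $C_i+I$, all other parameters and variables unchanged; $F_{\mathcal A}$ alone means the unshifted function. *)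

(* Complex numbers: R[i] = complex R for R : realType
   (mathcomp-real-closed); for R the reals this is C. *)
From HB Require Import structures.
From mathcomp Require Import all_boot all_order all_algebra.
From mathcomp Require Import all_reals.
From mathcomp Require Export complex.
Set Implicit Arguments. Unset Strict Implicit. Unset Printing Implicit Defensive.
Import Order.TTheory GRing.Theory Num.Theory.
Local Open Scope ring_scope.

Section Lauricella.
Variables (R : realType) (r k : nat).
Local Notation M := ('M[R[i]]_r).

Definition poch (X : M) (m : nat) : M :=
  \big[mulmx/1%:M]_(j < m) (X + (j%:R)%:M).

(* Formal power series in x_1..x_k with matrix coefficients:
   coefficient function on multi-indices m : 'I_k -> nat. *)
Definition fps := ('I_k -> nat) -> M.

(* Coefficients of the Lauricella matrix function F_A[A,B,C;x]. Products over
   i are taken in increasing order of i. *)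
Definition lauricella (A : M) (B C : 'I_k -> M) : fps := fun m =>
  ((\prod_(i < k) (m i)`!)%:R)^-1 *:
    (poch A (\sum_(i < k) m i)
     *m \big[mulmx/1%:M]_(i < k) poch (B i) (m i)
     *m \big[mulmx/1%:M]_(i < k) invmx (poch (C i) (m i))).

(* multi-index m - e_i (only used when m i > 0) *)
Definition mdec (i : 'I_k) (m : 'I_k -> nat) : 'I_k -> nat :=
  fun j => if j == i then (m j).-1 else m j.

(* x_i * F as a formal power series *)
Definition mulX (i : 'I_k) (F : fps) : fps := fun m =>
  if (0 < m i)%N then F (mdec i m) else 0.

Definition shift1 (B : 'I_k -> M) (i : 'I_k) : 'I_k -> M :=
  fun j => if j == i then B j + 1%:M else B j.

End Lauricella.

From HB Require Import structures.
From mathcomp Require Import all_boot all_order all_algebra.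
From mathcomp Require Import all_reals complex.
From mathcomp Require Import ring.
Import Order.TTheory GRing.Theory Num.Theory.
Local Open Scope ring_scope.

(* The heart of the matter is the scalar-like Pochhammer identity
     (X+I)_N - (X)_N = N (X+I)_(N-1),
   which telescopes to
     (X+nI)_N = (X)_N + N * sum_(n1=1..n) (X+n1 I)_(N-1),
     (X-nI)_N = (X)_N - N * sum_(n1=0..n-1) (X-n1 I)_(N-1).
   On the other side, the coefficient of x^m in x_j B_j F_A[X,B_j+I,C_j+I] C_j^-1
   is  m_j/m! (X)_(|m|-1) prod_i (B_i)_(m_i) prod_i (C_i)_(m_i)^-1 : the extra
   factors B_j and C_j^-1 complete the j-th Pochhammer symbols through
   (M)_(p+1) = M (M+I)_p, thanks to the commutation hypotheses.  Summing over
   j produces the factor |m| = sum_j m_j, and the theorem follows. *)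

Section MatrixInverse.
Variables (R : comUnitRingType) (n : nat).
Implicit Types (X Y : 'M[R]_n).

Lemma invmxM X Y :
  X \in unitmx -> Y \in unitmx -> invmx (X *m Y) = invmx Y *m invmx X.
Proof.
move=> uX uY; have uXY : X *m Y \in unitmx by rewrite unitmx_mul uX uY.
by rewrite -[RHS](mulKmx uXY) -mulmxA (mulKVmx uY) (mulmxV uX) mulmx1.
Qed.

Lemma comm_mxV X Y : X \in unitmx -> comm_mx X Y -> comm_mx (invmx X) Y.
Proof.
rewrite /comm_mx => uX cXY; apply: (canRL (mulmxK uX)).
by rewrite -mulmxA -cXY mulKmx.
Qed.

End MatrixInverse.

Section OrderedProducts.
Context {R : pzSemiRingType} {n : nat} {I : eqType}.
Implicit Types (X Y : 'M[R]_n) (s : seq I) (F : I -> 'M[R]_n).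

Lemma comm_mx_prod Y s F : (forall i, i \in s -> comm_mx Y (F i)) ->
  comm_mx Y (\big[mulmx/1%:M]_(i <- s) F i).
Proof.
move=> cYF; rewrite big_seq.
by apply: (big_ind (comm_mx Y)) => [|P Q|i]; [exact: comm_mx1|exact: comm_mxM|exact: cYF].
Qed.

Lemma prod_absorb_l j0 X s F : uniq s -> j0 \in s ->
  (forall i, i != j0 -> comm_mx X (F i)) ->
  X *m \big[mulmx/1%:M]_(i <- s) F i =
  \big[mulmx/1%:M]_(i <- s) (if i == j0 then X *m F i else F i).
Proof.
move=> + + cXF; elim: s => //= h s IH /andP[hs us]; rewrite in_cons !big_cons.
case: (eqVneq h j0) => [<- _ | ne /= js]; last by rewrite mulmxA cXF // -mulmxA IH.
rewrite mulmxA; congr (_ *m _); apply: eq_big_seq => i si.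
by rewrite ifN //; apply: contraNneq hs => <-.
Qed.

Lemma prod_absorb_r j0 Y s F : uniq s -> j0 \in s ->
  (forall i, i != j0 -> comm_mx Y (F i)) ->
  \big[mulmx/1%:M]_(i <- s) F i *m Y =
  \big[mulmx/1%:M]_(i <- s) (if i == j0 then F i *m Y else F i).
Proof.
move=> + + cYF; elim: s => //= h s IH /andP[hs us]; rewrite in_cons !big_cons.
case: (eqVneq h j0) => [hj0 _ | ne /= js]; last by rewrite -mulmxA IH.
subst j0.
have s_ne_h i : i \in s -> i != h by move=> si; apply: contraNneq hs => <-.
rewrite -mulmxA -comm_mx_prod => [|i si]; last exact/cYF/s_ne_h.
rewrite mulmxA; congr (_ *m _); apply: eq_big_seq => i si.
by rewrite ifN // s_ne_h.
Qed.

End OrderedProducts.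

Section Pochhammer.
Context {R : realType} {r : nat}.
Implicit Types (X Y : 'M[R[i]]_r).

Lemma scalar_natS X c : X + (c.+1%:R)%:M = X + 1%:M + (c%:R)%:M.
Proof. by rewrite -addn1 natrD raddfD /= addrA addrAC. Qed.

Lemma poch0 X : poch X 0 = 1%:M.
Proof. by rewrite /poch big_ord0. Qed.

Lemma pochS_l X m : poch X m.+1 = X *m poch (X + 1%:M) m.
Proof.
rewrite /poch big_ord_recl /= raddf0 addr0; congr (_ *m _).
by apply: eq_bigr => j _; rewrite /= /bump /= add1n scalar_natS.
Qed.

Lemma pochS_r X m : poch X m.+1 = poch X m *m (X + (m%:R)%:M).
Proof.
elim: m X => [|m IH] X; first by rewrite pochS_l !poch0 mulmx1 mul1mx raddf0 addr0.
by rewrite pochS_l IH mulmxA -pochS_l scalar_natS.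
Qed.

Lemma comm_mx_poch {Y X m} : comm_mx Y X -> comm_mx Y (poch X m).
Proof.
move=> cYX; apply: (big_ind (comm_mx Y)) => [|P Q|j _]; first exact: comm_mx1.
  exact: comm_mxM.
exact/comm_mxD/comm_mx_scalar.
Qed.

Lemma unitmx_poch X m :
  (forall c : nat, X + (c%:R)%:M \in unitmx) -> poch X m \in unitmx.
Proof.
move=> uX; apply: (big_ind (fun P => P \in unitmx)) => [|P Q uP uQ|j _] //.
- exact: unitmx1.
- by rewrite unitmx_mul uP uQ.
Qed.

Lemma unitmx_shift1 X :
  (forall c : nat, X + (c%:R)%:M \in unitmx) ->
  (forall c : nat, X + 1%:M + (c%:R)%:M \in unitmx).
Proof. by move=> uX c; rewrite -scalar_natS. Qed.

Lemma poch_diff X N :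
  poch (X + 1%:M) N - poch X N = N%:R *: poch (X + 1%:M) N.-1.
Proof.
case: N => [|N] /=; first by rewrite !poch0 scale0r subrr.
rewrite pochS_r pochS_l.
have -> : X *m poch (X + 1%:M) N = poch (X + 1%:M) N *m X.
  by apply/comm_mx_poch/comm_mxD; [exact: comm_mx_refl | exact: comm_mx_scalar].
rewrite -mulmxBr (_ : X + 1%:M + (N%:R)%:M - X = (N.+1%:R)%:M).
  by rewrite scalar_mxC mul_scalar_mx.
by rewrite addrC -addrA addKr -raddfD /= addrC natr1.
Qed.

Lemma poch_shift_up X N n :
  poch (X + (n%:R)%:M) N =
  poch X N + N%:R *: \sum_(1 <= n1 < n.+1) poch (X + (n1%:R)%:M) N.-1.
Proof.
elim: n => [|n IH]; first by rewrite big_geq // scaler0 addr0 raddf0 addr0.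
rewrite big_nat_recr //= scalerDr addrA -IH.
rewrite (_ : X + (n.+1%:R)%:M = X + (n%:R)%:M + 1%:M); last first.
  by rewrite -natr1 raddfD addrA.
by rewrite -poch_diff addrCA subrr addr0.
Qed.

Lemma poch_shift_down X N n :
  poch (X - (n%:R)%:M) N =
  poch X N - N%:R *: \sum_(0 <= n1 < n) poch (X - (n1%:R)%:M) N.-1.
Proof.
elim: n => [|n IH]; first by rewrite big_geq // scaler0 subr0 raddf0 subr0.
rewrite big_nat_recr //= scalerDr opprD addrA -IH.
rewrite (_ : X - (n%:R)%:M = X - (n.+1%:R)%:M + 1%:M); last first.
  by rewrite -natr1 raddfD opprD addrA subrK.
by rewrite -poch_diff opprB addrCA subrr addr0.
Qed.

End Pochhammer.

Section MultiIndex.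
Variables (k : nat) (j : 'I_k) (m : 'I_k -> nat).
Hypothesis m_j_gt0 : (0 < m j)%N.

Lemma sum_mdec : (\sum_(i < k) m i = (\sum_(i < k) mdec j m i).+1)%N.
Proof.
rewrite (bigD1 j) //= [in RHS](bigD1 j) //= /mdec eqxx -addSn prednK //.
by congr addn; apply: eq_bigr => i /negbTE ->.
Qed.

Lemma prod_mdec : (\prod_(i < k) (m i)`! = m j * \prod_(i < k) (mdec j m i)`!)%N.
Proof.
rewrite (bigD1 j) //= [in RHS](bigD1 j) //= /mdec eqxx.
rewrite -[in LHS](prednK m_j_gt0) factS prednK // mulnA; congr muln.
by apply: eq_bigr => i /negbTE ->.
Qed.

End MultiIndex.
Arguments sum_mdec {k j m}.
Arguments prod_mdec {k j m}.

Section PochhammerProducts.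
Variables (R : realType) (r k : nat).

Definition poch_prod (B : 'I_k -> 'M[R[i]]_r) (m : 'I_k -> nat) :=
  \big[mulmx/1%:M]_(i < k) poch (B i) (m i).

Definition inv_poch_prod (C : 'I_k -> 'M[R[i]]_r) (m : 'I_k -> nat) :=
  \big[mulmx/1%:M]_(i < k) invmx (poch (C i) (m i)).

Lemma lauricellaE (X : 'M[R[i]]_r) (B C : 'I_k -> 'M[R[i]]_r) m :
  lauricella X B C m =
  ((\prod_(i < k) (m i)`!)%:R)^-1 *:
    (poch X (\sum_(i < k) m i) *m poch_prod B m *m inv_poch_prod C m).
Proof. by []. Qed.

End PochhammerProducts.
Arguments poch_prod {R r k}.
Arguments inv_poch_prod {R r k}.

Section ShiftedCoefficients.
Context {R : realType} {r k : nat} {B C : 'I_k -> 'M[R[i]]_r}.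
Hypothesis C_unit : forall (j : 'I_k) (c : nat), C j + (c%:R)%:M \in unitmx.
Hypothesis B_comm : forall j l : 'I_k, comm_mx (B j) (B l).
Hypothesis C_comm : forall j l : 'I_k, comm_mx (C j) (C l).

Lemma poch_prod_shift {j m} : (0 < m j)%N ->
  B j *m poch_prod (shift1 B j) (mdec j m) = poch_prod B m.
Proof.
move=> mj; rewrite /poch_prod (prod_absorb_l j)
  ?index_enum_uniq ?mem_index_enum //.
  apply: eq_bigr => i _; rewrite /shift1 /mdec; case: eqVneq => [->|//].
  by rewrite -pochS_l prednK.
by move=> i ne; rewrite /shift1 /mdec (negbTE ne); exact/comm_mx_poch/B_comm.
Qed.

Lemma inv_poch_prod_shift {j m} : (0 < m j)%N ->
  inv_poch_prod (shift1 C j) (mdec j m) *m invmx (C j) = inv_poch_prod C m.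
Proof.
move=> mj; have uCj : C j \in unitmx by have := C_unit j 0; rewrite raddf0 addr0.
rewrite /inv_poch_prod (prod_absorb_r j)
  ?index_enum_uniq ?mem_index_enum //.
  apply: eq_bigr => i _; rewrite /shift1 /mdec; case: eqVneq => [->|//].
  rewrite -invmxM ?unitmx_poch //; last exact: unitmx_shift1.
  by rewrite -pochS_l prednK.
move=> i ne; rewrite /shift1 /mdec (negbTE ne).
have uP : poch (C i) (m i) \in unitmx by exact: unitmx_poch.
apply/comm_mx_sym/comm_mxV => //; apply/comm_mx_sym/comm_mxV => //.
exact/comm_mx_poch/C_comm.
Qed.

Lemma shifted_term_coef X j m : comm_mx (B j) X -> (0 < m j)%N ->
  B j *m lauricella X (shift1 B j) (shift1 C j) (mdec j m) *m invmx (C j) =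
  ((m j)%:R / (\prod_(i < k) (m i)`!)%:R) *:
    (poch X (\sum_(i < k) m i).-1 *m poch_prod B m *m inv_poch_prod C m).
Proof.
move=> cBX mj; rewrite /lauricella -scalemxAr -scalemxAl.
have -> : ((\prod_(i < k) (mdec j m i)`!)%:R)^-1 =
          ((m j)%:R / (\prod_(i < k) (m i)`!)%:R) :> R[i].
  have mj0 : (m j)%:R != 0 :> R[i] by rewrite pnatr_eq0 -lt0n.
  have fact0 : (\prod_(i < k) (mdec j m i)`!)%:R != 0 :> R[i].
    by rewrite pnatr_eq0 -lt0n prodn_gt0 // => i; exact: fact_gt0.
  by rewrite (prod_mdec mj) natrM; field; rewrite mj0 fact0.
rewrite (sum_mdec mj) /= -(poch_prod_shift mj) -(inv_poch_prod_shift mj).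
by rewrite /poch_prod /inv_poch_prod !mulmxA (comm_mx_poch cBX).
Qed.

Lemma shifted_sum_coef (T : nat -> 'M[R[i]]_r) (a b : nat) m :
  (forall (j : 'I_k) n1, comm_mx (B j) (T n1)) ->
  \sum_(j < k) B j *m
     mulX j (fun m' => \sum_(a <= n1 < b)
               lauricella (T n1) (shift1 B j) (shift1 C j) m') m *m invmx (C j) =
  ((\prod_(i < k) (m i)`!)%:R)^-1 *:
    (((\sum_(i < k) m i)%:R *: \sum_(a <= n1 < b) poch (T n1) (\sum_(i < k) m i).-1)
       *m poch_prod B m *m inv_poch_prod C m).
Proof.
move=> cBT; rewrite -!scalemxAl scalerA mulrC natr_sum mulr_suml scaler_suml.
apply: eq_bigr => j _; rewrite /mulX; case: (posnP (m j)) => [->|mj] /=.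
  by rewrite mulmx0 mul0mx mul0r scale0r.
rewrite mulmx_sumr !mulmx_suml scaler_sumr; apply: eq_bigr => n1 _.
exact: shifted_term_coef (cBT j n1) mj.
Qed.

End ShiftedCoefficients.

Theorem mainTheorem1 (R : realType) (r k : nat) (A : 'M[R[i]]_r)
    (B C : 'I_k -> 'M[R[i]]_r) (n : nat) :
  (1 <= k)%N ->
  (forall (j : 'I_k) (m : nat), C j + (m%:R)%:M \in unitmx) ->
  (forall j : 'I_k, A *m B j = B j *m A) ->
  (forall j l : 'I_k, B j *m B l = B l *m B j) ->
  (forall j l : 'I_k, C j *m C l = C l *m C j) ->
  (1 <= n)%N ->
  (forall m : nat, A + (m%:R)%:M \in unitmx) ->
  (forall m : 'I_k -> nat,
     lauricella (A + (n%:R)%:M) B C m =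
     lauricella A B C m +
     \sum_(j < k) B j *m
        mulX j (fun m' => \sum_(1 <= n1 < n.+1)
                  lauricella (A + (n1%:R)%:M) (shift1 B j) (shift1 C j) m') m
        *m invmx (C j))
  /\
  ((forall n1 : nat, (n1 <= n)%N -> A - (n1%:R)%:M \in unitmx) ->
   forall m : 'I_k -> nat,
     lauricella (A - (n%:R)%:M) B C m =
     lauricella A B C m -
     \sum_(j < k) B j *m
        mulX j (fun m' => \sum_(0 <= n1 < n)
                  lauricella (A - (n1%:R)%:M) (shift1 B j) (shift1 C j) m') m
        *m invmx (C j)).
Proof.
move=> _ C_unit AB B_comm C_comm _ _.
have BA (j : 'I_k) : comm_mx (B j) A by exact/comm_mx_sym/AB.
split=> [m | _ m].
  rewrite (shifted_sum_coef C_unit B_comm C_comm (fun n1 => A + (n1%:R)%:M)).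
    by rewrite !lauricellaE poch_shift_up !mulmxDl scalerDr.
  by move=> j n1; apply: comm_mxD; [exact: BA | exact: comm_mx_scalar].
rewrite (shifted_sum_coef C_unit B_comm C_comm (fun n1 => A - (n1%:R)%:M)).
  by rewrite !lauricellaE poch_shift_down !mulmxBl scalerBr.
by move=> j n1; apply: comm_mxB; [exact: BA | exact: comm_mx_scalar].
Qed.
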